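(* (1) Every congruence hyperextensible category $\mathbb E$ is crystallographic with respect to the structure of subtraction and with respect to the structure of (abelian) group: on every object of $\mathbb E$ there is at most one internal subtraction and at most one internal group structure. (2) If $\mathbb E$ is a Gumm category, then for every object $Y$, every object of the fiber $Pt_Y\mathbb E$ carries at most one internal group structure in $Pt_Y\mathbb E$.
   Context: A pointed finitely complete category $\mathbb E$ is congruence hyperextensible if for every commutative diagram of split epimorphisms $f:W\to X$ (section $s$), $g:W\to Y$ (section $t$) with $gs=0$, $ft=0$, and every equivalence relation $T$ on $W$ with $R[f]\cap R[g]\subseteq T$, one has $R[f]\cap g^{-1}(t^{-1}(T))\subseteq T$ ($R[f]$ the kernel equivalence relation of $f$). An internal subtraction on $X$ in a pointed category is $s:X\times X\to X$ with $s(x,x)=0$ and $s(x,0)=x$. A finitely complete category is a Gumm category if it satisfies the Shifting Lemma: for equivalence relations $R,S,T$ on an object with $R\cap S\subseteq T$, whenever (in generalized elements) $x\,S\,y$, $x'\,S\,y'$, $x\,R\,x'$, $y\,R\,y'$ and $x\,T\,x'$, then $y\,T\,y'$. $Pt_Y\mathbb E$ is the (pointed) category of split epimorphisms onto $Y$ with chosen sections. *)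

From Stdlib Require Import ProofIrrelevance.

Record Category := {
  ob :> Type;
  hom : ob -> ob -> Type;
  idm : forall A, hom A A;
  comp : forall A B C, hom B C -> hom A B -> hom A C;
  comp_assoc : forall A B C D (h : hom C D) (g : hom B C) (f : hom A B),
      comp A C D h (comp A B C g f) = comp A B D (comp B C D h g) f;
  comp_id_l : forall A B (f : hom A B), comp A B B (idm B) f = f;
  comp_id_r : forall A B (f : hom A B), comp A A B f (idm A) = f }.
Arguments hom {c} A B.
Arguments idm {c} A.
Arguments comp {c A B C} g f.
Arguments comp_assoc {c A B C D} h g f.
Arguments comp_id_l {c A B} f.
Arguments comp_id_r {c A B} f.
Infix "∘" := comp (at level 40, left associativity).

Record Cartesian (C : Category) := {
  term : C;
  bang : forall A : C, hom A term;
  bang_uniq : forall A (f : hom A term), f = bang A;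
  prod : C -> C -> C;
  pr1 : forall A B, hom (prod A B) A;
  pr2 : forall A B, hom (prod A B) B;
  pair : forall D A B, hom D A -> hom D B -> hom D (prod A B);
  pair1 : forall D A B (f : hom D A) (g : hom D B), pr1 A B ∘ pair D A B f g = f;
  pair2 : forall D A B (f : hom D A) (g : hom D B), pr2 A B ∘ pair D A B f g = g;
  pair_uniq : forall D A B (f : hom D A) (g : hom D B) (h : hom D (prod A B)),
      pr1 A B ∘ h = f -> pr2 A B ∘ h = g -> h = pair D A B f g }.
Arguments term {C} c.
Arguments bang {C} c A.
Arguments prod {C} c A B.
Arguments pr1 {C} c A B.
Arguments pr2 {C} c A B.
Arguments pair {C} c {D A B} f g.

Record Pullbacks (C : Category) := {
  pb : forall A B Z : C, hom A Z -> hom B Z -> C;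
  pb1 : forall A B Z (f : hom A Z) (g : hom B Z), hom (pb A B Z f g) A;
  pb2 : forall A B Z (f : hom A Z) (g : hom B Z), hom (pb A B Z f g) B;
  pb_comm : forall A B Z (f : hom A Z) (g : hom B Z), f ∘ pb1 A B Z f g = g ∘ pb2 A B Z f g;
  pbpair : forall D A B Z (f : hom A Z) (g : hom B Z) (h : hom D A) (k : hom D B),
      f ∘ h = g ∘ k -> hom D (pb A B Z f g);
  pbpair1 : forall D A B Z (f : hom A Z) (g : hom B Z) h k (H : f ∘ h = g ∘ k),
      pb1 A B Z f g ∘ pbpair D A B Z f g h k H = h;
  pbpair2 : forall D A B Z (f : hom A Z) (g : hom B Z) h k (H : f ∘ h = g ∘ k),
      pb2 A B Z f g ∘ pbpair D A B Z f g h k H = k;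
  pbpair_uniq : forall D A B Z (f : hom A Z) (g : hom B Z) h k (H : f ∘ h = g ∘ k)
      (u : hom D (pb A B Z f g)), pb1 A B Z f g ∘ u = h -> pb2 A B Z f g ∘ u = k ->
      u = pbpair D A B Z f g h k H }.
Arguments pb {C} c {A B Z} f g : rename.
Arguments pb1 {C} c {A B Z} f g : rename.
Arguments pb2 {C} c {A B Z} f g : rename.
Arguments pb_comm {C} c {A B Z} f g : rename.
Arguments pbpair {C} c {D A B Z f g h k} H : rename.
Arguments pbpair1 {C} c {D A B Z f g h k} H : rename.
Arguments pbpair2 {C} c {D A B Z f g h k} H : rename.
Arguments pbpair_uniq {C} c {D A B Z f g h k} H u _ _ : rename.

Record FinitelyComplete (C : Category) := {
  fc_cart : Cartesian C;
  fc_pb : Pullbacks C }.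
Arguments fc_cart {C} f : rename.
Arguments fc_pb {C} f : rename.

Record Pointed (C : Category) (K : Cartesian C) := {
  zin : forall B : C, hom (term K) B;
  zin_uniq : forall B (u : hom (term K) B), u = zin B }.
Arguments Pointed {C} K.
Arguments zin {C K} p B : rename.

Definition zero {C : Category} {K : Cartesian C} (P : Pointed K) (A B : C) : hom A B :=
  zin P B ∘ bang K A.

Record Relation (C : Category) (W : C) := {
  rel_ob : C;
  rel1 : hom rel_ob W;
  rel2 : hom rel_ob W;
  rel_jmono : forall A (u v : hom A rel_ob), rel1 ∘ u = rel1 ∘ v -> rel2 ∘ u = rel2 ∘ v -> u = v }.
Arguments Relation {C} W.
Arguments rel_ob {C W} r : rename.
Arguments rel1 {C W} r : rename.
Arguments rel2 {C W} r : rename.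

Definition rel_holds {C : Category} {W : C} (R : Relation W) {A : C} (x y : hom A W) : Prop :=
  exists u : hom A (rel_ob R), rel1 R ∘ u = x /\ rel2 R ∘ u = y.

Definition IsEquivalence {C : Category} {W : C} (R : Relation W) : Prop :=
  (forall A (x : hom A W), rel_holds R x x) /\
  (forall A (x y : hom A W), rel_holds R x y -> rel_holds R y x) /\
  (forall A (x y z : hom A W), rel_holds R x y -> rel_holds R y z -> rel_holds R x z).

(* Membership in R[f] is  f x = f y;  membership in g^{-1}(t^{-1}(T)) is
   (t g x) T (t g y); inclusion of relations is inclusion on generalized
   elements (intersection = conjunction). *)
Definition CongruenceHyperextensible {C : Category} (F : FinitelyComplete C)
    (P : Pointed (fc_cart F)) : Prop :=
  forall (W X Y : C) (f : hom W X) (s : hom X W) (g : hom W Y) (t : hom Y W),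
    f ∘ s = idm X -> g ∘ t = idm Y -> g ∘ s = zero P X Y -> f ∘ t = zero P Y X ->
    forall T : Relation W, IsEquivalence T ->
      (forall A (x y : hom A W), f ∘ x = f ∘ y -> g ∘ x = g ∘ y -> rel_holds T x y) ->
      (forall A (x y : hom A W), f ∘ x = f ∘ y ->
          rel_holds T (t ∘ g ∘ x) (t ∘ g ∘ y) -> rel_holds T x y).

Definition Gumm (C : Category) : Prop :=
  forall (W : C) (R S T : Relation W),
    IsEquivalence R -> IsEquivalence S -> IsEquivalence T ->
    (forall A (x y : hom A W), rel_holds R x y -> rel_holds S x y -> rel_holds T x y) ->
    forall A (x y x' y' : hom A W),
      rel_holds S x y -> rel_holds S x' y' -> rel_holds R x x' -> rel_holds R y y' ->
      rel_holds T x x' -> rel_holds T y y'.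

Definition IsSubtraction {C : Category} {K : Cartesian C} (P : Pointed K) (X : C)
    (s : hom (prod K X X) X) : Prop :=
  s ∘ pair K (idm X) (idm X) = zero P X X /\
  s ∘ pair K (idm X) (zero P X X) = idm X.

Record InternalGroup {C : Category} (K : Cartesian C) (X : C) := {
  grp_mul : hom (prod K X X) X;
  grp_unit : hom (term K) X;
  grp_inv : hom X X;
  grp_assoc : forall A (a b c : hom A X),
      grp_mul ∘ pair K (grp_mul ∘ pair K a b) c = grp_mul ∘ pair K a (grp_mul ∘ pair K b c);
  grp_unit_l : forall A (a : hom A X), grp_mul ∘ pair K (grp_unit ∘ bang K A) a = a;
  grp_unit_r : forall A (a : hom A X), grp_mul ∘ pair K a (grp_unit ∘ bang K A) = a;
  grp_inv_l : forall A (a : hom A X), grp_mul ∘ pair K (grp_inv ∘ a) a = grp_unit ∘ bang K A;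
  grp_inv_r : forall A (a : hom A X), grp_mul ∘ pair K a (grp_inv ∘ a) = grp_unit ∘ bang K A }.
Arguments grp_mul {C K X} g : rename.
Arguments grp_unit {C K X} g : rename.
Arguments grp_inv {C K X} g : rename.

Definition same_group {C : Category} {K : Cartesian C} {X : C} (G1 G2 : InternalGroup K X) : Prop :=
  grp_mul G1 = grp_mul G2 /\ grp_unit G1 = grp_unit G2 /\ grp_inv G1 = grp_inv G2.

Lemma sig_eq_ext (T : Type) (Pr : T -> Prop) (x y : sig Pr) :
  proj1_sig x = proj1_sig y -> x = y.
Proof.
  destruct x as [x hx], y as [y hy]; simpl; intros ->.
  f_equal; apply proof_irrelevance.
Qed.

Section Fibre.
Variable E : Category.
Variable Y : E.

Record PtObj := {
  pt_ob : E;
  pt_p : hom pt_ob Y;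
  pt_s : hom Y pt_ob;
  pt_ps : pt_p ∘ pt_s = idm Y }.

Definition PtHom (A B : PtObj) : Type :=
  { f : hom (pt_ob A) (pt_ob B) | pt_p B ∘ f = pt_p A /\ f ∘ pt_s A = pt_s B }.

Definition pt_id (A : PtObj) : PtHom A A.
Proof.
  exists (idm _); split; [apply comp_id_r | apply comp_id_l].
Defined.

Definition pt_comp (A B D : PtObj) (g : PtHom B D) (f : PtHom A B) : PtHom A D.
Proof.
  exists (proj1_sig g ∘ proj1_sig f).
  destruct g as [g [g1 g2]], f as [f [f1 f2]]; simpl; split.
  - rewrite comp_assoc, g1; exact f1.
  - rewrite <- comp_assoc, f2; exact g2.
Defined.

Definition PtCat : Category.
Proof.
  refine {| ob := PtObj; hom := PtHom; idm := pt_id; comp := pt_comp |};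
    intros; apply sig_eq_ext; simpl.
  - apply comp_assoc.
  - apply comp_id_l.
  - apply comp_id_r.
Defined.

Variable PB : Pullbacks E.

Definition pt_term : PtObj := {| pt_ob := Y; pt_p := idm Y; pt_s := idm Y; pt_ps := comp_id_l _ |}.

Definition pt_bang (A : PtObj) : PtHom A pt_term.
Proof.
  exists (pt_p A); simpl; split; [apply comp_id_l | apply pt_ps].
Defined.

Lemma pt_bang_uniq (A : PtObj) (f : PtHom A pt_term) : f = pt_bang A.
Proof.
  apply sig_eq_ext; destruct f as [f [f1 f2]]; simpl in *.
  rewrite <- f1; symmetry; apply comp_id_l.
Qed.

Lemma pt_sec_eq (A B : PtObj) : pt_p A ∘ pt_s A = pt_p B ∘ pt_s B.
Proof. rewrite !pt_ps; reflexivity. Qed.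

Definition pt_prod_s (A B : PtObj) : hom Y (pb PB (pt_p A) (pt_p B)) :=
  pbpair PB (pt_sec_eq A B).

Lemma pt_prod_ps (A B : PtObj) :
  (pt_p A ∘ pb1 PB (pt_p A) (pt_p B)) ∘ pt_prod_s A B = idm Y.
Proof.
  unfold pt_prod_s; rewrite <- comp_assoc, pbpair1; apply pt_ps.
Qed.

Definition pt_prod (A B : PtObj) : PtObj :=
  {| pt_ob := pb PB (pt_p A) (pt_p B);
     pt_p := pt_p A ∘ pb1 PB (pt_p A) (pt_p B);
     pt_s := pt_prod_s A B;
     pt_ps := pt_prod_ps A B |}.

Definition pt_pr1 (A B : PtObj) : PtHom (pt_prod A B) A.
Proof.
  exists (pb1 PB (pt_p A) (pt_p B)); simpl; split; [reflexivity | apply pbpair1].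
Defined.

Definition pt_pr2 (A B : PtObj) : PtHom (pt_prod A B) B.
Proof.
  exists (pb2 PB (pt_p A) (pt_p B)); simpl; split.
  - symmetry; apply pb_comm.
  - apply pbpair2.
Defined.

Lemma pt_pair_eq {D A B : PtObj} (f : PtHom D A) (g : PtHom D B) :
  pt_p A ∘ proj1_sig f = pt_p B ∘ proj1_sig g.
Proof.
  destruct f as [f [f1 f2]], g as [g [g1 g2]]; simpl; rewrite f1, g1; reflexivity.
Qed.

Definition pt_pair (D A B : PtObj) (f : PtHom D A) (g : PtHom D B) : PtHom D (pt_prod A B).
Proof.
  exists (pbpair PB (pt_pair_eq f g)); simpl; split.
  - rewrite <- comp_assoc, pbpair1; destruct f as [f [f1 f2]]; exact f1.
  - unfold pt_prod_s; apply pbpair_uniq.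
    + rewrite comp_assoc, pbpair1; destruct f as [f [f1 f2]]; exact f2.
    + rewrite comp_assoc, pbpair2; destruct g as [g [g1 g2]]; exact g2.
Defined.

Definition PtCart : Cartesian PtCat.
Proof.
  refine {| term := (pt_term : PtCat); bang := pt_bang; bang_uniq := pt_bang_uniq;
            prod := pt_prod; pr1 := pt_pr1; pr2 := pt_pr2; pair := pt_pair |};
    intros; try apply sig_eq_ext; simpl.
  - apply pbpair1.
  - apply pbpair2.
  - apply pbpair_uniq; [rewrite <- H | rewrite <- H0]; reflexivity.
Defined.

End Fibre.
Arguments PtObj {E} Y.

(* Both parts of the theorem go through internal subtractions.  In any pointed
   category with binary products an internal group (X, ·, 1, (-)⁻¹) induces the
   subtraction σ(a, b) = a · b⁻¹, and the group is recovered from σ: the unit is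
   the zero map, a⁻¹ = σ(0, a) and a · b = σ(a, b⁻¹).  So on an object with at
   most one subtraction there is at most one internal group.

   (1) In a congruence hyperextensible category, applying the defining property
       to the split epimorphisms pr2, pr1 : X × X → X and to the kernel of
       (a, b) ↦ s1(a, s2(a, b)) gives s1(a, s2(a, b)) = b for any subtractions
       s1, s2; two such cancellation laws force s1 = s2.
   (2) The fibre Pt_Y E is pointed (the zero object is Y itself) and a
       subtraction on (p : A → Y, e) is a map σ : A ×_Y A → A over Y with
       σ(a, a) = e p a and σ(a, e p a) = a.  In a Gumm category the Shifting
       Lemma, applied to the kernels of the two projections of A ×_Y A, again
       yields the cancellation law, hence uniqueness of subtractions in the fibre. *)
From Stdlib Require Import Setoid.

Section CartesianFacts.
Context {C : Category} (K : Cartesian C).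

Lemma pair_comp {D D' A B : C} (f : hom D A) (g : hom D B) (h : hom D' D) :
  pair K f g ∘ h = pair K (f ∘ h) (g ∘ h).
Proof.
  apply pair_uniq; rewrite comp_assoc; [rewrite pair1 | rewrite pair2]; reflexivity.
Qed.

Lemma pair_eta {D A B : C} (h : hom D (prod K A B)) :
  h = pair K (pr1 K A B ∘ h) (pr2 K A B ∘ h).
Proof. apply pair_uniq; reflexivity. Qed.

Lemma pair_pr (A B : C) : pair K (pr1 K A B) (pr2 K A B) = idm _.
Proof. symmetry; apply pair_uniq; apply comp_id_r. Qed.

End CartesianFacts.

Section PointedFacts.
Context {C : Category} {K : Cartesian C} (P : Pointed K).

Lemma zero_comp {D A B : C} (h : hom D A) : zero P A B ∘ h = zero P D B.
Proof.
  unfold zero; rewrite <- comp_assoc, (bang_uniq _ K _ (bang K A ∘ h)); reflexivity.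
Qed.

Lemma subtraction_diag {X : C} (s : hom (prod K X X) X) : IsSubtraction P X s ->
  forall D (a : hom D X), s ∘ pair K a a = zero P D X.
Proof.
  intros [Hdiag _] D a.
  rewrite <- (comp_id_l a), <- pair_comp, comp_assoc, Hdiag; apply zero_comp.
Qed.

Lemma subtraction_zero {X : C} (s : hom (prod K X X) X) : IsSubtraction P X s ->
  forall D (a : hom D X), s ∘ pair K a (zero P D X) = a.
Proof.
  intros [_ Hzero] D a.
  replace (pair K a (zero P D X)) with (pair K (idm X) (zero P X X) ∘ a)
    by (rewrite pair_comp, comp_id_l, zero_comp; reflexivity).
  rewrite comp_assoc, Hzero; apply comp_id_l.
Qed.

End PointedFacts.

Section GroupSubtraction.
Context {C : Category} {K : Cartesian C} (P : Pointed K) {X : C} (G : InternalGroup K X).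

Definition group_subtraction : hom (prod K X X) X :=
  grp_mul G ∘ pair K (pr1 K X X) (grp_inv G ∘ pr2 K X X).

Lemma group_subtraction_pair {D : C} (a b : hom D X) :
  group_subtraction ∘ pair K a b = grp_mul G ∘ pair K a (grp_inv G ∘ b).
Proof.
  unfold group_subtraction.
  rewrite <- comp_assoc, pair_comp, pair1, <- comp_assoc, pair2; reflexivity.
Qed.

Lemma group_unit_zero (D : C) : grp_unit G ∘ bang K D = zero P D X.
Proof. unfold zero; rewrite (zin_uniq _ _ P _ (grp_unit G)); reflexivity. Qed.

Lemma group_inv_unit : grp_inv G ∘ grp_unit G = grp_unit G.
Proof.
  pose proof (grp_inv_l _ _ G _ (grp_unit G)) as Hinv.
  pose proof (grp_unit_r _ _ G _ (grp_inv G ∘ grp_unit G)) as Hunit.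
  rewrite <- (bang_uniq _ K _ (idm _)), comp_id_r in Hinv, Hunit; congruence.
Qed.

Lemma group_inv_inv {D : C} (a : hom D X) : grp_inv G ∘ (grp_inv G ∘ a) = a.
Proof.
  rewrite <- (grp_unit_r _ _ G _ (grp_inv G ∘ (grp_inv G ∘ a))).
  rewrite <- (grp_inv_l _ _ G _ a), <- grp_assoc, grp_inv_l, grp_unit_l; reflexivity.
Qed.

Lemma group_subtraction_is_subtraction : IsSubtraction P X group_subtraction.
Proof.
  split; rewrite group_subtraction_pair.
  - rewrite grp_inv_r; apply group_unit_zero.
  - rewrite <- group_unit_zero, comp_assoc, group_inv_unit; apply grp_unit_r.
Qed.

Lemma group_inv_from_subtraction :
  grp_inv G = group_subtraction ∘ pair K (zero P X X) (idm X).
Proof.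
  rewrite group_subtraction_pair, comp_id_r, <- group_unit_zero, grp_unit_l; reflexivity.
Qed.

Lemma group_mul_from_subtraction :
  grp_mul G = group_subtraction ∘ pair K (pr1 K X X) (grp_inv G ∘ pr2 K X X).
Proof.
  rewrite group_subtraction_pair, group_inv_inv, pair_pr, comp_id_r; reflexivity.
Qed.

End GroupSubtraction.

Lemma same_group_of_subtraction {C : Category} {K : Cartesian C} (P : Pointed K)
    {X : C} (G1 G2 : InternalGroup K X) :
  group_subtraction G1 = group_subtraction G2 -> same_group G1 G2.
Proof.
  intros Hsub.
  assert (Hinv : grp_inv G1 = grp_inv G2).
  { rewrite (group_inv_from_subtraction P G1), (group_inv_from_subtraction P G2), Hsub.
    reflexivity. }
  split; [| split]; [| | exact Hinv].
  - rewrite (group_mul_from_subtraction G1), (group_mul_from_subtraction G2), Hsub, Hinv.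
    reflexivity.
  - rewrite (zin_uniq _ _ P _ (grp_unit G1)), (zin_uniq _ _ P _ (grp_unit G2)).
    reflexivity.
Qed.

Lemma groups_unique_of_subtractions_unique {C : Category} {K : Cartesian C}
    (P : Pointed K) (X : C) :
  (forall s1 s2 : hom (prod K X X) X, IsSubtraction P X s1 -> IsSubtraction P X s2 -> s1 = s2) ->
  forall G1 G2 : InternalGroup K X, same_group G1 G2.
Proof.
  intros Hunique G1 G2; apply (same_group_of_subtraction P).
  apply Hunique; apply group_subtraction_is_subtraction.
Qed.

Section KernelRelations.
Context {C : Category} (PB : Pullbacks C).

Lemma pb_jointly_monic {D A B Z : C} (f : hom A Z) (g : hom B Z) (u v : hom D (pb PB f g)) :
  pb1 PB f g ∘ u = pb1 PB f g ∘ v -> pb2 PB f g ∘ u = pb2 PB f g ∘ v -> u = v.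
Proof.
  intros H1 H2.
  assert (Hu : f ∘ (pb1 PB f g ∘ u) = g ∘ (pb2 PB f g ∘ u))
    by (rewrite !comp_assoc, pb_comm; reflexivity).
  rewrite (pbpair_uniq PB Hu u eq_refl eq_refl).
  symmetry; apply pbpair_uniq; auto.
Qed.

Lemma pb_point {D A B Z : C} (f : hom A Z) (g : hom B Z) (a : hom D A) (b : hom D B) :
  f ∘ a = g ∘ b -> exists w : hom D (pb PB f g), pb1 PB f g ∘ w = a /\ pb2 PB f g ∘ w = b.
Proof. intros H; exists (pbpair PB H); split; [apply pbpair1 | apply pbpair2]. Qed.

Definition kernel_relation {W Z : C} (phi : hom W Z) : Relation W :=
  {| rel_ob := pb PB phi phi; rel1 := pb1 PB phi phi; rel2 := pb2 PB phi phi;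
     rel_jmono := fun A u v => pb_jointly_monic phi phi u v |}.

Lemma kernel_relation_iff {W Z : C} (phi : hom W Z) {A : C} (x y : hom A W) :
  rel_holds (kernel_relation phi) x y <-> phi ∘ x = phi ∘ y.
Proof.
  split.
  - intros [u [<- <-]]; simpl; rewrite !comp_assoc, pb_comm; reflexivity.
  - intros H; apply (pb_point phi phi x y H).
Qed.

Lemma kernel_relation_equivalence {W Z : C} (phi : hom W Z) :
  IsEquivalence (kernel_relation phi).
Proof.
  split; [| split]; intros *; rewrite !kernel_relation_iff; congruence.
Qed.

End KernelRelations.

Section HyperextensibleSubtractions.
Context {E : Category} (F : FinitelyComplete E) (P : Pointed (fc_cart F)).
Hypothesis Hyper : CongruenceHyperextensible F P.
Local Notation K := (fc_cart F).

(* Apply hyperextensibility to the split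
   epimorphisms pr2 (section ⟨0, 1⟩) and pr1 (section ⟨1, 0⟩) of X × X and to the
   kernel T of φ(a, b) = s1(a, s2(a, b)); the pairs (a, b) and (b, b) have equal
   second components and φ(a, 0) = 0 = φ(b, 0), so φ(a, b) = φ(b, b) = b. *)
Lemma hyperextensible_cancellation {X : E} (s1 s2 : hom (prod K X X) X) :
  IsSubtraction P X s1 -> IsSubtraction P X s2 ->
  forall D (a b : hom D X), s1 ∘ pair K a (s2 ∘ pair K a b) = b.
Proof.
  intros S1 S2 D a b.
  set (phi := s1 ∘ pair K (pr1 K X X) s2).
  assert (Hphi : forall u v : hom D X,
             phi ∘ pair K u v = s1 ∘ pair K u (s2 ∘ pair K u v)).
  { intros u v; unfold phi; rewrite <- comp_assoc, pair_comp, pair1; reflexivity. }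
  assert (Hphi_zero : forall u : hom D X, phi ∘ pair K u (zero P D X) = zero P D X).
  { intros u; rewrite Hphi, (subtraction_zero P s2 S2), (subtraction_diag P s1 S1).
    reflexivity. }
  assert (Hdiag_in_T : forall A (x y : hom A (prod K X X)),
             pr2 K X X ∘ x = pr2 K X X ∘ y -> pr1 K X X ∘ x = pr1 K X X ∘ y ->
             rel_holds (kernel_relation (fc_pb F) phi) x y).
  { intros A x y H2 H1; apply kernel_relation_iff.
    rewrite (pair_eta K x), (pair_eta K y), H1, H2; reflexivity. }
  pose proof (Hyper (prod K X X) X X (pr2 K X X) (pair K (zero P X X) (idm X))
                (pr1 K X X) (pair K (idm X) (zero P X X))
                ltac:(apply pair2) ltac:(apply pair1) ltac:(apply pair1) ltac:(apply pair2)
                (kernel_relation (fc_pb F) phi) (kernel_relation_equivalence _ phi)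
                Hdiag_in_T D (pair K a b) (pair K b b)) as Hshift.
  rewrite !pair2, !kernel_relation_iff, !Hphi in Hshift.
  rewrite (subtraction_diag P s2 S2), (subtraction_zero P s1 S1) in Hshift.
  apply Hshift; [reflexivity |].
  rewrite <- !comp_assoc, !pair1, !pair_comp, !comp_id_l, !zero_comp, !Hphi_zero.
  reflexivity.
Qed.

(* Two cancellation laws force two subtractions to coincide:
   s2(a, b) = s1(a, s1(a, s2(a, b))) = s1(a, b). *)
Lemma hyperextensible_subtraction_unique (X : E) (s1 s2 : hom (prod K X X) X) :
  IsSubtraction P X s1 -> IsSubtraction P X s2 -> s1 = s2.
Proof.
  intros S1 S2.
  assert (Hpoint : forall D (a b : hom D X), s1 ∘ pair K a b = s2 ∘ pair K a b).
  { intros D a b.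
    rewrite <- (hyperextensible_cancellation s1 s1 S1 S1 D a (s2 ∘ pair K a b)).
    rewrite (hyperextensible_cancellation s1 s2 S1 S2); reflexivity. }
  rewrite <- (comp_id_r s1), <- (comp_id_r s2), <- pair_pr; apply Hpoint.
Qed.

End HyperextensibleSubtractions.

Section FibreSubtractions.
Context {E : Category} (PB : Pullbacks E) {Y A : E} (p : hom A Y) (e : hom Y A).
Hypothesis pe : p ∘ e = idm Y.
Local Notation W := (pb PB p p).
Local Notation q1 := (pb1 PB p p).
Local Notation q2 := (pb2 PB p p).

(* A subtraction on the object (A, p, e) of Pt_Y E, read in E: a map
   σ : A ×_Y A → A over Y with σ(a, a) = e p a and σ(a, e p a) = a. *)
Definition fibre_subtraction (s : hom W A) : Prop :=
  p ∘ s = p ∘ q1 /\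
  (forall D (w : hom D W), q1 ∘ w = q2 ∘ w -> s ∘ w = e ∘ p ∘ (q1 ∘ w)) /\
  (forall D (w : hom D W), q2 ∘ w = e ∘ p ∘ (q1 ∘ w) -> s ∘ w = q1 ∘ w).

Lemma fibre_zero_over {D : E} (a : hom D A) : p ∘ a = p ∘ (e ∘ p ∘ a).
Proof. rewrite !comp_assoc, pe, comp_id_l; reflexivity. Qed.

(* It suffices to check the two identities on the generic points (1, 1) and
   (1, e p) of A ×_Y A, since every point (a, a) or (a, e p a) factors through them. *)
Lemma fibre_subtraction_of_generic (s : hom W A) (m0 m1 : hom A W) :
  q1 ∘ m0 = idm A -> q2 ∘ m0 = idm A -> q1 ∘ m1 = idm A -> q2 ∘ m1 = e ∘ p ->
  p ∘ s = p ∘ q1 -> s ∘ m0 = e ∘ p -> s ∘ m1 = idm A -> fibre_subtraction s.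
Proof.
  intros Hm01 Hm02 Hm11 Hm12 Hover Hdiag Hzero.
  split; [exact Hover | split]; intros D w Hw.
  - assert (Hfactor : w = m0 ∘ (q1 ∘ w)).
    { apply pb_jointly_monic; rewrite comp_assoc; [rewrite Hm01 | rewrite Hm02];
        rewrite comp_id_l; [reflexivity | symmetry; exact Hw]. }
    rewrite Hfactor at 1; rewrite comp_assoc, Hdiag; reflexivity.
  - assert (Hfactor : w = m1 ∘ (q1 ∘ w)).
    { apply pb_jointly_monic; rewrite comp_assoc; [rewrite Hm11, comp_id_l | rewrite Hm12];
        [reflexivity | exact Hw]. }
    rewrite Hfactor at 1; rewrite comp_assoc, Hzero; apply comp_id_l.
Qed.

Section Cancellation.
Variables sj sk : hom W A.
Hypotheses (Sj : fibre_subtraction sj) (Sk : fibre_subtraction sk).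

(* The shear v0(a, b) = (a, sk(a, b)) of A ×_Y A; the map whose kernel enters the
   Shifting Lemma is φ = sj ∘ v0, i.e. φ(a, b) = sj(a, sk(a, b)). *)
Lemma shear_exists : exists v0 : hom W W, q1 ∘ v0 = q1 /\ q2 ∘ v0 = sk.
Proof. apply pb_point; symmetry; apply Sk. Qed.

Lemma shear_point (v0 : hom W W) : q1 ∘ v0 = q1 -> q2 ∘ v0 = sk ->
  forall D (w v : hom D W), q1 ∘ v = q1 ∘ w -> q2 ∘ v = sk ∘ w -> sj ∘ v0 ∘ w = sj ∘ v.
Proof.
  intros Hv01 Hv02 D w v Hv1 Hv2.
  rewrite <- comp_assoc; f_equal; apply pb_jointly_monic;
    rewrite comp_assoc; [rewrite Hv01 | rewrite Hv02]; symmetry; assumption.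
Qed.

Lemma shear_on_zero_axis (v0 : hom W W) : q1 ∘ v0 = q1 -> q2 ∘ v0 = sk ->
  forall D (w : hom D W), q2 ∘ w = e ∘ p ∘ (q1 ∘ w) -> sj ∘ v0 ∘ w = e ∘ p ∘ (q1 ∘ w).
Proof.
  intros Hv01 Hv02 D w Hw.
  destruct (pb_point PB p p (q1 ∘ w) (q1 ∘ w) eq_refl) as [v [Hv1 Hv2]].
  rewrite (shear_point v0 Hv01 Hv02 D w v Hv1).
  - rewrite (proj1 (proj2 Sj) D v); [rewrite Hv1; reflexivity | congruence].
  - rewrite Hv2; symmetry; apply (proj2 (proj2 Sk)), Hw.
Qed.

Lemma shear_on_diagonal (v0 : hom W W) : q1 ∘ v0 = q1 -> q2 ∘ v0 = sk ->
  forall D (w : hom D W), q1 ∘ w = q2 ∘ w -> sj ∘ v0 ∘ w = q1 ∘ w.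
Proof.
  intros Hv01 Hv02 D w Hw.
  destruct (pb_point PB p p (q1 ∘ w) (e ∘ p ∘ (q1 ∘ w)) (fibre_zero_over _))
    as [v [Hv1 Hv2]].
  rewrite (shear_point v0 Hv01 Hv02 D w v Hv1).
  - rewrite (proj2 (proj2 Sj) D v); [exact Hv1 | rewrite Hv1; exact Hv2].
  - rewrite Hv2; symmetry; apply (proj1 (proj2 Sk)), Hw.
Qed.

(* Cancellation law sj(a, sk(a, b)) = b, by the Shifting Lemma for the kernels
   R = R[q2], S = R[q1], T = R[φ] on A ×_Y A and the four points
       x = (a, e p a),  y = (a, b),  x' = (b, e p b),  y' = (b, b):
   x S y, x' S y', x R x', y R y' and φ x = e p a = e p b = φ x', hence
   b = φ y' = φ y = sj(a, sk(a, b)). *)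
Lemma gumm_cancellation (HG : Gumm E) :
  forall D (u v : hom D W), q1 ∘ v = q1 ∘ u -> q2 ∘ v = sk ∘ u -> sj ∘ v = q2 ∘ u.
Proof.
  intros D u v Hv1 Hv2.
  destruct shear_exists as [v0 [Hv01 Hv02]].
  set (phi := sj ∘ v0).
  set (a := q1 ∘ u); set (b := q2 ∘ u).
  assert (Hab : p ∘ a = p ∘ b) by (unfold a, b; rewrite !comp_assoc, pb_comm; reflexivity).
  destruct (pb_point PB p p a (e ∘ p ∘ a) (fibre_zero_over a)) as [x [Hx1 Hx2]].
  destruct (pb_point PB p p b (e ∘ p ∘ b) (fibre_zero_over b)) as [x' [Hx'1 Hx'2]].
  destruct (pb_point PB p p b b eq_refl) as [y' [Hy'1 Hy'2]].
  assert (Hintersection : forall A0 (w w' : hom A0 W),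
             rel_holds (kernel_relation PB q2) w w' -> rel_holds (kernel_relation PB q1) w w' ->
             rel_holds (kernel_relation PB phi) w w').
  { intros A0 w w'; rewrite !kernel_relation_iff; intros H2 H1.
    rewrite (pb_jointly_monic PB p p w w' H1 H2); reflexivity. }
  pose proof (HG W _ _ _ (kernel_relation_equivalence PB q2)
                (kernel_relation_equivalence PB q1) (kernel_relation_equivalence PB phi)
                Hintersection D x u x' y') as Hshift.
  rewrite !kernel_relation_iff in Hshift.
  assert (Hpa : e ∘ p ∘ a = e ∘ p ∘ b) by (rewrite <- !comp_assoc, Hab; reflexivity).
  unfold phi in Hshift.
  rewrite (shear_point v0 Hv01 Hv02 D u v Hv1 Hv2),
    (shear_on_diagonal v0 Hv01 Hv02 D y') in Hshift by congruence.
  rewrite Hy'1 in Hshift.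
  apply Hshift; [exact Hx1 | exact Hx'1 | rewrite Hx2, Hx'2; exact Hpa
                | symmetry; exact Hy'2 |].
  rewrite (shear_on_zero_axis v0 Hv01 Hv02 D x), (shear_on_zero_axis v0 Hv01 Hv02 D x')
    by congruence.
  rewrite Hx1, Hx'1; exact Hpa.
Qed.

End Cancellation.

Lemma gumm_fibre_subtraction_unique (HG : Gumm E) (s1 s2 : hom W A) :
  fibre_subtraction s1 -> fibre_subtraction s2 -> s1 = s2.
Proof.
  intros S1 S2.
  destruct (shear_exists s2 S2) as [v0 [Hv01 Hv02]].
  assert (Hs1v0 : s1 ∘ v0 = q2).
  { rewrite <- (comp_id_r q2); apply (gumm_cancellation s1 s2 S1 S2 HG);
      rewrite comp_id_r; assumption. }
  rewrite <- (comp_id_r s1), <- Hv02.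
  apply (gumm_cancellation s1 s1 S1 S1 HG); rewrite comp_id_r; congruence.
Qed.

End FibreSubtractions.

Section FibreIsPointed.
Context {E : Category} (PB : Pullbacks E) (Y : E).
Local Notation KP := (PtCart E Y PB).

Definition pt_zero_in (B : PtObj Y) : PtHom E Y (pt_term E Y) B.
Proof. exists (pt_s E Y B); split; [apply pt_ps | apply comp_id_r]. Defined.

Lemma pt_zero_in_uniq (B : PtObj Y) (u : PtHom E Y (pt_term E Y) B) : u = pt_zero_in B.
Proof.
  apply sig_eq_ext; destruct (proj2_sig u) as [_ Hu]; simpl in Hu.
  rewrite <- Hu; symmetry; apply comp_id_r.
Qed.

Definition PtPointed : Pointed KP :=
  @Build_Pointed (PtCat E Y) KP pt_zero_in pt_zero_in_uniq.

Lemma pt_subtraction_fibre (A : PtCat E Y) (s : hom (prod KP A A) A) :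
  IsSubtraction PtPointed A s ->
  fibre_subtraction PB (pt_p E Y A) (pt_s E Y A) (proj1_sig s).
Proof.
  intros [Hdiag Hzero].
  apply (fibre_subtraction_of_generic PB (pt_p E Y A) (pt_s E Y A) _
           (proj1_sig (pair KP (idm A) (idm A)))
           (proj1_sig (pair KP (idm A) (zero PtPointed A A))));
    try apply pbpair1; try apply pbpair2.
  - exact (proj1 (proj2_sig s)).
  - exact (f_equal (@proj1_sig _ _) Hdiag).
  - exact (f_equal (@proj1_sig _ _) Hzero).
Qed.

Lemma gumm_pt_subtraction_unique (HG : Gumm E) (A : PtCat E Y) (s1 s2 : hom (prod KP A A) A) :
  IsSubtraction PtPointed A s1 -> IsSubtraction PtPointed A s2 -> s1 = s2.
Proof.
  intros S1 S2; apply sig_eq_ext.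
  apply (gumm_fibre_subtraction_unique PB (pt_p E Y A) (pt_s E Y A) (pt_ps E Y A) HG);
    apply pt_subtraction_fibre; assumption.
Qed.

End FibreIsPointed.

Theorem mainTheorem10 :
  (* (1) congruence hyperextensible => crystallographic w.r.t. subtraction and groups *)
  (forall (E : Category) (F : FinitelyComplete E) (P : Pointed (fc_cart F)),
     CongruenceHyperextensible F P ->
     (forall (X : E) (s1 s2 : hom (prod (fc_cart F) X X) X),
        IsSubtraction P X s1 -> IsSubtraction P X s2 -> s1 = s2) /\
     (forall (X : E) (G1 G2 : InternalGroup (fc_cart F) X), same_group G1 G2)) /\
  (* (2) Gumm => every object of every fibre Pt_Y E has at most one internal group structure *)
  (forall (E : Category) (F : FinitelyComplete E),
     Gumm E ->
     forall (Y : E) (A : PtCat E Y)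
       (G1 G2 : InternalGroup (PtCart E Y (fc_pb F)) A), same_group G1 G2).
Proof.
  split.
  - intros E F P Hyper; split.
    + exact (hyperextensible_subtraction_unique F P Hyper).
    + intros X; apply (groups_unique_of_subtractions_unique P X).
      exact (hyperextensible_subtraction_unique F P Hyper X).
  - intros E F HG Y A.
    apply (groups_unique_of_subtractions_unique (PtPointed (fc_pb F) Y) A).
    exact (gumm_pt_subtraction_unique (fc_pb F) Y HG A).
Qed.
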